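(* Let $S$ be semibounded in $\mathfrak H$ with lower bound $\gamma\in\mathbb R$ and $c\le\gamma$. Let $Q_c$ (into $\mathfrak K_c$) and $Q_c'$ (into $\mathfrak K_c'$) be representing maps for $\mathfrak t(S)-c$, and let $V:\mathfrak K_c\to\mathfrak K_c'$ be a partial isometry with initial space $\overline{\mathrm{ran}}\,Q_c$ and final space $\overline{\mathrm{ran}}\,Q_c'$ such that $Q_c'=VQ_c$. Let $J_c$ and $J_c'$ be the companion relations of $Q_c$ and $Q_c'$. Then $J_c'\,(V\restriction\mathrm{ran}\,Q_c)=J_c$; moreover $S\subset c+J_c'Q_c'=c+J_cQ_c$, where the inclusion is an equality if and only if $\mathrm{ran}\,(S-c)\cap\mathrm{mul}\,S^*=\mathrm{mul}\,S$; and $((J_c')^* )_{\rm reg}=V\,(J_c^* )_{\rm reg}$.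
   Context: Linear relations are linear subspaces $T\subset\mathfrak H\times\mathfrak K$; $\mathrm{dom},\mathrm{ran},\mathrm{mul}\,T=\{g:\{0,g\}\in T\}$; $T^*=\{\{h,k\}:(k,f)=(h,g)\ \forall\{f,g\}\in T\}$; $RT=\{\{f,h\}:\exists g,\{f,g\}\in T,\{g,h\}\in R\}$; $c+T=\{\{f,g+cf\}:\{f,g\}\in T\}$, $S-c=\{\{f,g-cf\}:\{f,g\}\in S\}$. For a closed relation $T$, $T_{\rm reg}=\{\{f,(I-\pi)g\}:\{f,g\}\in T\}$ with $\pi$ the orthogonal projection onto $\mathrm{mul}\,T$. $S$ is semibounded with lower bound $\gamma$ if $\gamma$ is the supremum of all $c$ with $(\varphi',\varphi)\ge c\|\varphi\|^2$ for all $\{\varphi,\varphi'\}\in S$; $\mathfrak t(S)[\varphi,\psi]=(\varphi',\psi)$ on $\mathrm{dom}\,S$. A representing map for $\mathfrak t(S)-c$ is a linear operator $Q_c$ into a Hilbert space with $\mathrm{dom}\,Q_c=\mathrm{dom}\,S$ and $\mathfrak t(S)[\varphi,\psi]=c(\varphi,\psi)+(Q_c\varphi,Q_c\psi)$; its companion relation is $J_c=\{\{Q_c\varphi,\varphi'-c\varphi\}:\{\varphi,\varphi'\}\in S\}$. *)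

From HB Require Import structures.
From mathcomp Require Import all_boot all_order all_algebra.
From mathcomp Require Import boolp classical_sets reals.
From mathcomp Require Import complex.
Set Implicit Arguments. Unset Strict Implicit. Unset Printing Implicit Defensive.
Import Order.TTheory GRing.Theory Num.Theory.
Local Open Scope ring_scope.
Local Open Scope classical_set_scope.
Local Open Scope complex_scope.

(* The inner product is linear in its first argument and conjugate linear in
   the second; [hnorm x = sqrt (complex.Re (x,x))]; completeness is sequential
   completeness for the induced norm. *)
Record hilbert (R : realType) := Hilbert {
  hcarrier :> lmodType R[i];
  hinner : hcarrier -> hcarrier -> R[i];
  hinnerDl : forall (a : R[i]) (x y z : hcarrier),
      hinner (a *: x + y) z = a * hinner x z + hinner y z;
  hinnerC : forall x y : hcarrier, hinner y x = (hinner x y)^*;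
  hinner_ge0 : forall x : hcarrier, 0 <= hinner x x;
  hinner_eq0 : forall x : hcarrier, hinner x x = 0 -> x = 0;
  hcomplete : forall u : nat -> hcarrier,
      (forall e : R, 0 < e -> exists N : nat, forall m n : nat, (N <= m)%N -> (N <= n)%N ->
          Num.sqrt (complex.Re (hinner (u m - u n) (u m - u n))) < e) ->
      exists l : hcarrier, forall e : R, 0 < e -> exists N : nat, forall n : nat, (N <= n)%N ->
          Num.sqrt (complex.Re (hinner (u n - l) (u n - l))) < e
}.

Arguments hinner {R} h _ _.

Section Defs.
Variable R : realType.

Definition hnorm (H : hilbert R) (x : H) : R := Num.sqrt (complex.Re (hinner H x x)).

Definition hclosure (H : hilbert R) (A : set H) : set H :=
  [set x | forall e : R, 0 < e -> exists2 a, A a & hnorm (x - a) < e].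

Definition horth (H : hilbert R) (A : set H) : set H :=
  [set x | forall a, A a -> hinner H x a = 0].

Definition is_subspace (X : lmodType R[i]) (A : set X) : Prop :=
  A 0 /\ forall (a : R[i]) x y, A x -> A y -> A (a *: x + y).

Definition linrel (H K : Type) := set (H * K).

Definition is_linrel (H K : lmodType R[i]) (T : linrel H K) : Prop :=
  T (0, 0) /\ forall (a : R[i]) f g f' g', T (f, g) -> T (f', g') ->
    T (a *: f + f', a *: g + g').

Definition rdom (H K : lmodType R[i]) (T : linrel H K) : set H :=
  [set f | exists g, T (f, g)].
Definition rran (H K : lmodType R[i]) (T : linrel H K) : set K :=
  [set g | exists f, T (f, g)].
Definition rmul (H K : lmodType R[i]) (T : linrel H K) : set K :=
  [set g | T (0, g)].

Definition radj (H K : hilbert R) (T : linrel H K) : linrel K H :=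
  [set hk | forall f g, T (f, g) -> hinner H hk.2 f = hinner K hk.1 g].

Definition rcomp (H K L : lmodType R[i]) (S : linrel K L) (T : linrel H K)
  : linrel H L := [set fh | exists g, T (fh.1, g) /\ S (g, fh.2)].

Definition raddc (H : lmodType R[i]) (c : R) (T : linrel H H) : linrel H H :=
  [set fh | exists g, T (fh.1, g) /\ fh.2 = g + c%:C *: fh.1].
Definition rsubc (H : lmodType R[i]) (S : linrel H H) (c : R) : linrel H H :=
  [set fh | exists g, S (fh.1, g) /\ fh.2 = g - c%:C *: fh.1].

Definition opgraph (H K : lmodType R[i]) (A : set H) (q : H -> K) : linrel H K :=
  [set xk | A xk.1 /\ xk.2 = q xk.1].

(* T_reg = {{f, (I - pi) g} : {f,g} in T}, pi the orthogonal projection onto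
   mul T; (I - pi) g is characterised as the h with g - h in mul T and
   h orthogonal to mul T (mul T is closed when T is closed). *)
Definition rreg (H K : hilbert R) (T : linrel H K) : linrel H K :=
  [set fh | exists g, T (fh.1, g) /\ rmul T (g - fh.2) /\ horth (rmul T) fh.2].

Definition sb_const (H : hilbert R) (S : linrel H H) (c : R) : Prop :=
  forall phi phi', S (phi, phi') -> c%:C * hinner H phi phi <= hinner H phi' phi.

Definition semibounded_lb (H : hilbert R) (S : linrel H H) (gamma : R) : Prop :=
  (forall c, sb_const S c -> c <= gamma) /\
  (forall u, (forall c, sb_const S c -> c <= u) -> gamma <= u).

(* Q (a linear operator from dom S into K) is a representing map for
   t(S) - c, where t(S)[phi, psi] = (phi', psi) on dom S *)
Definition representing_map (H K : hilbert R) (S : linrel H H) (c : R)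
    (Q : H -> K) : Prop :=
  (forall (a : R[i]) x y, rdom S x -> rdom S y -> Q (a *: x + y) = a *: Q x + Q y) /\
  (forall phi phi' psi, S (phi, phi') -> rdom S psi ->
     hinner H phi' psi = c%:C * hinner H phi psi + hinner K (Q phi) (Q psi)).

Definition rop (H K : hilbert R) (S : linrel H H) (Q : H -> K) : linrel H K :=
  opgraph (rdom S) Q.

Definition companion (H K : hilbert R) (S : linrel H H) (c : R) (Q : H -> K)
  : linrel K H :=
  [set kh | exists phi phi', S (phi, phi') /\ kh.1 = Q phi /\
                             kh.2 = phi' - c%:C *: phi].

Definition partial_isometry (K K' : hilbert R) (V : {linear K -> K'})
    (M : set K) (N : set K') : Prop :=
  (forall x, M x -> hnorm (V x) = hnorm x) /\
  (forall x, horth M x -> V x = 0) /\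
  V @` setT = N.

End Defs.

From HB Require Import structures.
From mathcomp Require Import all_boot all_order all_algebra.
From mathcomp Require Import boolp classical_sets reals.
From mathcomp Require Import complex.
From mathcomp Require Import ring lra.
Import Order.TTheory GRing.Theory Num.Theory.
Set Implicit Arguments. Unset Strict Implicit. Unset Printing Implicit Defensive.
Local Open Scope ring_scope.
Local Open Scope classical_set_scope.
Local Open Scope complex_scope.

(* Both representing maps satisfy (Q x, Q psi) = (x' - c x, psi) on S x dom S,
   so they have the same kernel {x : x' - c x is orthogonal to dom S}; hence
   J_c Q_c = J_c' Q_c', and c + J_c Q_c enlarges S exactly by the elements of
   ran (S - c) that are orthogonal to dom S, i.e. lie in mul S^*.
   On the adjoint side mul J_c^* = (ran Q_c)^perp, so by the projection theorem
   the regular part of J_c^* consists of the pairs of J_c^* whose second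
   component lies in the closure of ran Q_c.  There V preserves inner products
   (polarization) and maps onto the closure of ran Q_c', while it kills the
   orthogonal complement; this transports the regular part of J_c^* onto that
   of J_c'^*. *)

Lemma Re_conji_mul (R : rcfType) (z : R[i]) : complex.Re ('i^* * z) = complex.Im z.
Proof. by case: z => a b /=; rewrite mul0r mulN1r opprK add0r. Qed.

Lemma Re_realM (R : rcfType) (s : R) (z : R[i]) : complex.Re (s%:C * z) = s * complex.Re z.
Proof. by case: z => a b /=; rewrite mul0r subr0. Qed.

Lemma complex_eq0 (R : rcfType) (z : R[i]) :
  complex.Re z = 0 -> complex.Im z = 0 -> z = 0.
Proof. by case: z => a b /= -> ->. Qed.

Lemma quad_bound_eq0 (R : realFieldType) (u N : R) : 0 <= N ->
  (forall s, 2 * s * u <= s ^+ 2 * N) -> u = 0.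
Proof.
move=> N_ge0 bound; have N1_neq0 : N + 1 != 0 by rewrite gt_eqF ?ltr_wpDl.
pose t := u / (N + 1); have ut : u = t * (N + 1) by rewrite divfK.
have : t ^+ 2 == 0 by rewrite eq_le sqr_ge0 andbT; have := bound t; rewrite {1}ut; nra.
by rewrite sqrf_eq0 ut => /eqP ->; rewrite mul0r.
Qed.

Section InnerProduct.
Variables (R : realType) (K : hilbert R).
Implicit Types (x y z : K) (a : R[i]) (s : R).

Lemma hinner_addl x y z : hinner K (x + y) z = hinner K x z + hinner K y z.
Proof. by have := hinnerDl 1 x y z; rewrite scale1r mul1r. Qed.

Lemma hinner0l z : hinner K 0 z = 0.
Proof. by apply/(addrI (hinner K 0 z)); rewrite -hinner_addl !addr0. Qed.

Lemma hinnerZl a x z : hinner K (a *: x) z = a * hinner K x z.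
Proof. by have := hinnerDl a x 0 z; rewrite !addr0 hinner0l addr0. Qed.

Lemma hinnerNl x z : hinner K (- x) z = - hinner K x z.
Proof. by rewrite -scaleN1r hinnerZl mulN1r. Qed.

Lemma hinnerBl x y z : hinner K (x - y) z = hinner K x z - hinner K y z.
Proof. by rewrite hinner_addl hinnerNl. Qed.

Lemma hinner0r z : hinner K z 0 = 0.
Proof. by rewrite hinnerC hinner0l conjc0. Qed.

Lemma hinner_addr x y z : hinner K z (x + y) = hinner K z x + hinner K z y.
Proof. by rewrite !(hinnerC _ z) hinner_addl rmorphD. Qed.

Lemma hinnerZr a x z : hinner K z (a *: x) = a^* * hinner K z x.
Proof. by rewrite !(hinnerC _ z) hinnerZl rmorphM. Qed.

Lemma hinnerNr x z : hinner K z (- x) = - hinner K z x.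
Proof. by rewrite !(hinnerC _ z) hinnerNl rmorphN. Qed.

Lemma hinnerBr x y z : hinner K z (x - y) = hinner K z x - hinner K z y.
Proof. by rewrite hinner_addr hinnerNr. Qed.

Lemma hinnerZr_real s x z : hinner K z (s%:C *: x) = s%:C * hinner K z x.
Proof. by rewrite hinnerZr; congr (_ * _); exact: conjc_real. Qed.

Lemma Re_hinnerC x y : complex.Re (hinner K y x) = complex.Re (hinner K x y).
Proof. by rewrite hinnerC; case: (hinner K x y). Qed.

Definition hnorm2 x : R := complex.Re (hinner K x x).

Lemma hinnerxx x : hinner K x x = (hnorm2 x)%:C.
Proof.
have := hinner_ge0 x; rewrite /hnorm2 lecE; case: (hinner K x x) => u v /=.
by case/andP => /eqP ->.
Qed.

Lemma hnorm2_ge0 x : 0 <= hnorm2 x.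
Proof. by have := hinner_ge0 x; rewrite hinnerxx lecR. Qed.

Lemma hnorm2_eq0 x : hnorm2 x = 0 -> x = 0.
Proof. by move=> x0; apply: hinner_eq0; rewrite hinnerxx x0. Qed.

Lemma sqr_hnorm x : hnorm x ^+ 2 = hnorm2 x.
Proof. by rewrite sqr_sqrtr // hnorm2_ge0. Qed.

Lemma hnorm_ge0 x : 0 <= hnorm x.
Proof. exact: sqrtr_ge0. Qed.

Lemma hnorm0 : hnorm (0 : K) = 0.
Proof. by rewrite /hnorm hinner0l sqrtr0. Qed.

Lemma hnorm_eq0 x : hnorm x = 0 -> x = 0.
Proof. by move=> x0; apply: hnorm2_eq0; rewrite -sqr_hnorm x0 expr0n. Qed.

Lemma hnorm2D x y :
  hnorm2 (x + y) = hnorm2 x + hnorm2 y + 2 * complex.Re (hinner K x y).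
Proof.
rewrite /hnorm2 hinner_addl !hinner_addr !raddfD /= (Re_hinnerC x y); lra.
Qed.

Lemma hnorm2N x : hnorm2 (- x) = hnorm2 x.
Proof. by rewrite /hnorm2 hinnerNl hinnerNr opprK. Qed.

Lemma hnorm2Zr s x : hnorm2 (s%:C *: x) = s ^+ 2 * hnorm2 x.
Proof. by rewrite /hnorm2 hinnerZl hinnerZr hinnerxx /=; ring. Qed.

Lemma hnorm2Zi x : hnorm2 ('i *: x) = hnorm2 x.
Proof. by rewrite /hnorm2 hinnerZl hinnerZr hinnerxx /=; ring. Qed.

Lemma hnormE x : hnorm x = Num.sqrt (hnorm2 x).
Proof. by []. Qed.

Lemma hnormN x : hnorm (- x) = hnorm x.
Proof. by rewrite !hnormE hnorm2N. Qed.

Lemma hnormZi x : hnorm ('i *: x) = hnorm x.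
Proof. by rewrite !hnormE hnorm2Zi. Qed.

Lemma hnorm2_subZr s x y :
  hnorm2 (x - s%:C *: y) = hnorm2 x - 2 * s * complex.Re (hinner K x y) + s ^+ 2 * hnorm2 y.
Proof.
rewrite hnorm2D hnorm2N hnorm2Zr hinnerNr hinnerZr_real raddfN /= Re_realM; lra.
Qed.

Lemma Re_hinner_le x y : complex.Re (hinner K x y) <= hnorm x * hnorm y.
Proof.
have [/eqP|nxy_neq0] := eqVneq (hnorm x * hnorm y) 0.
  rewrite mulf_eq0 => /orP[] /eqP/hnorm_eq0 ->.
    by rewrite hinner0l hnorm0 mul0r.
  by rewrite hinner0r hnorm0 mulr0.
have : 0 < hnorm x * hnorm y by rewrite lt_neqAle eq_sym nxy_neq0 mulr_ge0 ?hnorm_ge0.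
have := hnorm2_ge0 ((hnorm y)%:C *: x - (hnorm x)%:C *: y).
rewrite hnorm2_subZr hnorm2Zr hinnerZl Re_realM -!sqr_hnorm; nra.
Qed.

Lemma Re_hinner_abs_le x y : `|complex.Re (hinner K x y)| <= hnorm x * hnorm y.
Proof.
rewrite ler_norml Re_hinner_le andbT lerNl -raddfN /= -hinnerNr -(hnormN y).
exact: Re_hinner_le.
Qed.

Lemma Im_hinner_abs_le x y : `|complex.Im (hinner K x y)| <= hnorm x * hnorm y.
Proof. by rewrite -Re_conji_mul -hinnerZr -(hnormZi y) Re_hinner_abs_le. Qed.

Lemma hnormD x y : hnorm (x + y) <= hnorm x + hnorm y.
Proof.
rewrite -(ler_pXn2r (n := 2)) ?nnegrE ?addr_ge0 ?hnorm_ge0 //.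
by rewrite sqr_hnorm hnorm2D -!sqr_hnorm; have := Re_hinner_le x y; lra.
Qed.

Lemma hnorm2_parallelogram x y :
  hnorm2 (x - y) + hnorm2 (x + y) = 2 * hnorm2 x + 2 * hnorm2 y.
Proof. by rewrite !hnorm2D hnorm2N hinnerNr raddfN; lra. Qed.

End InnerProduct.

Section Closure.
Variables (R : realType) (K : hilbert R) (A : set K).
Hypothesis subA : is_subspace A.
Implicit Types (x y z k : K).

Lemma subspaceD x y : A x -> A y -> A (x + y).
Proof. by move=> Ax Ay; have := subA.2 1 x y Ax Ay; rewrite scale1r. Qed.

Lemma subspaceZ a x : A x -> A (a *: x).
Proof. by move=> Ax; have := subA.2 a x 0 Ax subA.1; rewrite addr0. Qed.

Lemma hclosure_sub : A `<=` hclosure A.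
Proof. by move=> y Ay e e_gt0; exists y; rewrite // subrr hnorm0. Qed.

Lemma hclosureDr x y : hclosure A x -> A y -> hclosure A (x + y).
Proof.
move=> clx Ay e e_gt0; have [a Aa xa] := clx e e_gt0.
by exists (a + y); [exact: subspaceD | rewrite opprD addrACA subrr addr0].
Qed.

Lemma hclosure_lb r k z :
  (forall a, A a -> r <= hnorm (k - a)) -> hclosure A z -> r <= hnorm (k - z).
Proof.
move=> lb clz; apply/ler_addgt0Pr => e e_gt0; have [a Aa za] := clz e e_gt0.
apply: le_trans (lb a Aa) _.
have -> : k - a = (k - z) + (z - a) by rewrite addrA subrK.
by apply: le_trans (hnormD _ _) _; rewrite lerD2l ltW.
Qed.

Lemma horth_hclosure : horth A `<=` horth (hclosure A).
Proof.
move=> r rA x clx.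
have approx e : 0 < e -> exists2 a, A a & hnorm r * hnorm (x - a) <= e.
  move=> e_gt0; have r1_gt0 : 0 < hnorm r + 1 by rewrite ltr_wpDl ?hnorm_ge0.
  have [a Aa xa] := clx _ (divr_gt0 e_gt0 r1_gt0); exists a => //.
  apply: le_trans (_ : (hnorm r + 1) * hnorm (x - a) <= e).
    by rewrite ler_wpM2r ?hnorm_ge0 ?lerDl.
  by rewrite mulrC -ler_pdivlMr // ltW.
have small (u : R) : (forall e, 0 < e -> `|u| <= e) -> u = 0.
  by move=> le_e; apply/eqP; rewrite -normr_le0; apply/ler_addgt0Pr => e /le_e; rewrite add0r.
have shift a : A a -> hinner K r x = hinner K r (x - a).
  by move=> Aa; rewrite hinnerBr (rA a Aa) subr0.
apply: complex_eq0; apply: small => e /approx[a Aa le_e]; rewrite (shift a Aa);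
  apply: le_trans le_e; [exact: Re_hinner_abs_le | exact: Im_hinner_abs_le].
Qed.

Lemma Re_hinner_eq0_of_min x b :
  (forall s : R, hnorm2 x <= hnorm2 (x - s%:C *: b)) -> complex.Re (hinner K x b) = 0.
Proof.
move=> min; apply: (quad_bound_eq0 (hnorm2_ge0 b)) => s.
by have := min s; rewrite hnorm2_subZr; lra.
Qed.

Lemma horth_of_nearest k l : hclosure A l ->
  (forall z, hclosure A z -> hnorm (k - l) <= hnorm (k - z)) -> horth A (k - l).
Proof.
move=> cll near b Ab.
have min y : A y -> forall s : R, hnorm2 (k - l) <= hnorm2 (k - l - s%:C *: y).
  move=> Ay s; rewrite -!sqr_hnorm ler_pXn2r ?nnegrE ?hnorm_ge0 // -addrA -opprD.
  by apply: near; apply: hclosureDr cll _; exact: subspaceZ.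
apply: complex_eq0; first exact: Re_hinner_eq0_of_min (min b Ab).
by rewrite -Re_conji_mul -hinnerZr; apply: Re_hinner_eq0_of_min; apply: min; exact: subspaceZ.
Qed.

Lemma hnorm2_sub_le_dist k (d : R) a b : 0 <= d -> (forall z, A z -> d <= hnorm (k - z)) ->
  A a -> A b -> hnorm2 (a - b) <= 2 * hnorm2 (k - a) + 2 * hnorm2 (k - b) - 4 * d ^+ 2.
Proof.
move=> d_ge0 lb Aa Ab; pose m := (2^-1 : R)%:C *: (a + b).
have dm : d ^+ 2 <= hnorm2 (k - m).
  rewrite -sqr_hnorm ler_pXn2r ?nnegrE ?hnorm_ge0 //.
  by apply: lb; apply: subspaceZ; exact: subspaceD.
have mid : (k - b) + (k - a) = (2 : R)%:C *: (k - m).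
  rewrite scalerBr scalerA -rmorphM /= mulfV ?pnatr_eq0 // scale1r.
  by rewrite rmorph_nat scaler_nat mulr2n opprD addrACA (addrC (- b)).
have := hnorm2_parallelogram (k - b) (k - a).
have -> : (k - b) - (k - a) = a - b by rewrite opprB addrC addrA subrK.
by rewrite mid hnorm2Zr; lra.
Qed.

Lemma minimizing_cauchy k (d : R) (f : nat -> K) :
  0 <= d -> (forall z, A z -> d <= hnorm (k - z)) -> (forall n, A (f n)) ->
  (forall n, hnorm (k - f n) < d + n.+1%:R^-1) ->
  forall e, 0 < e -> exists N, forall m n, (N <= m)%N -> (N <= n)%N -> hnorm (f m - f n) < e.
Proof.
move=> d_ge0 lb Af near e e_gt0; pose C := 2 * d + 1.
have C_gt0 : 0 < C by rewrite /C; lra.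
have excess n : hnorm2 (k - f n) - d ^+ 2 <= n.+1%:R^-1 * C.
  have := lb _ (Af n); have := near n; rewrite -sqr_hnorm /C.
  have : n.+1%:R^-1 <= 1 :> R by rewrite invf_le1 ?ltr0n // ler1n.
  have : 0 < n.+1%:R^-1 :> R by rewrite invr_gt0 ltr0n.
  by move: (hnorm _) (n.+1%:R^-1) => x eps; nra.
have [N ltN] := ltr_add_invr (divr_gt0 (exprn_gt0 2 e_gt0) (mulr_gt0 (ltr0n R 4) C_gt0)).
rewrite add0r ltr_pdivlMr ?mulr_gt0 // in ltN.
have eps_le p : (N <= p)%N -> p.+1%:R^-1 <= N.+1%:R^-1 :> R.
  by move=> Np; rewrite lef_pV2 ?posrE ?ltr0n // ler_nat.
exists N => m n Nm Nn.
rewrite -(ltr_pXn2r (n := 2)) ?nnegrE ?hnorm_ge0 ?ltW // sqr_hnorm.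
apply: le_lt_trans (hnorm2_sub_le_dist d_ge0 lb (Af m) (Af n)) _.
have epsC p : (N <= p)%N -> hnorm2 (k - f p) - d ^+ 2 <= N.+1%:R^-1 * C.
  by move=> Np; apply: le_trans (excess p) _; rewrite ler_wpM2r ?eps_le ?ltW.
by have := epsC _ Nm; have := epsC _ Nn; move: ltN; move: (N.+1%:R^-1) => eps; lra.
Qed.

Lemma orthogonal_projection k : exists2 l, hclosure A l & horth A (k - l).
Proof.
pose D := [set hnorm (k - a) | a in A].
have D_ne : D !=set0 by exists (hnorm (k - 0)), 0; first exact: subA.1.
have D_lb : has_lbound D by exists 0 => _ [a _ <-]; exact: hnorm_ge0.
pose d := inf D.
have lb z : A z -> d <= hnorm (k - z) by move=> Az; apply: (ge_inf D_lb); exists z.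
have d_ge0 : 0 <= d by apply: lb_le_inf D_ne _ => _ [a _ <-]; exact: hnorm_ge0.
have approx n : exists a, A a /\ hnorm (k - a) < d + n.+1%:R^-1.
  have eps_gt0 : 0 < n.+1%:R^-1 :> R by rewrite invr_gt0 ltr0n.
  by have [_ [a Aa <-] lt] := inf_adherent eps_gt0 (conj D_ne D_lb); exists a.
have [f near] := choice approx.
have := minimizing_cauchy d_ge0 lb (fun n => (near n).1) (fun n => (near n).2).
move/hcomplete => [l lim].
have {}lim e : 0 < e -> exists N, forall n, (N <= n)%N -> hnorm (f n - l) < e := lim e.
have cll : hclosure A l.
  move=> e e_gt0; have [N limN] := lim e e_gt0; exists (f N); first exact: (near N).1.
  by rewrite -hnormN opprB; exact: limN.
exists l => //; apply: horth_of_nearest cll _ => z clz.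
apply: le_trans (hclosure_lb lb clz); apply/ler_addgt0Pr => e e_gt0.
have e2_gt0 : 0 < e / 2 by rewrite divr_gt0.
have [N1 lim1] := lim _ e2_gt0; have [N2 ltN2] := ltr_add_invr e2_gt0; rewrite add0r in ltN2.
pose n := maxn N1 N2.
have eps_le : n.+1%:R^-1 <= N2.+1%:R^-1 :> R.
  by rewrite lef_pV2 ?posrE ?ltr0n // ler_nat ltnS leq_maxr.
have -> : k - l = (k - f n) + (f n - l) by rewrite addrA subrK.
apply: le_trans (hnormD _ _) _.
have := lim1 n (leq_maxl _ _); have := (near n).2; move: eps_le ltN2.
(* lra cannot see through the inverses, so they are abstracted first *)
by move: (n.+1%:R^-1) (N2.+1%:R^-1) => eps eps2; lra.
Qed.

Lemma horth_horth_sub : horth (horth A) `<=` hclosure A.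
Proof.
move=> x xAA; have [l cll xl] := orthogonal_projection x.
have : x - l = 0.
  apply: hinner_eq0; rewrite hinnerBl (xAA _ xl) [hinner K l _]hinnerC.
  by rewrite (horth_hclosure xl cll) conjc0 subrr.
by move/eqP; rewrite subr_eq0 => /eqP ->.
Qed.

End Closure.

Lemma linear_isometry_hinner (R : realType) (K K' : hilbert R) (V : {linear K -> K'})
    (P : set K) x y :
  (forall z, P z -> hnorm (V z) = hnorm z) -> P x -> P y -> P (x + y) -> P (x + 'i *: y) ->
  hinner K' (V x) (V y) = hinner K x y.
Proof.
move=> iso Px Py Pxy Pxiy.
have iso2 z : P z -> hnorm2 (V z) = hnorm2 z by move=> Pz; rewrite -!sqr_hnorm iso.
apply/eqP; rewrite eq_complex; apply/andP; split; apply/eqP.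
  by have := iso2 _ Pxy; rewrite linearD !hnorm2D (iso2 _ Px) (iso2 _ Py); lra.
have := iso2 _ Pxiy; rewrite linearD linearZ !hnorm2D !hnorm2Zi (iso2 _ Px) (iso2 _ Py).
by rewrite !hinnerZr !Re_conji_mul; lra.
Qed.

Lemma rmul_radj (R : realType) (K L : hilbert R) (T : linrel K L) :
  rmul (radj T) = horth (rdom T).
Proof.
apply/seteqP; split => k /=.
  by move=> adj a [g Tag]; rewrite (adj a g Tag) hinner0l.
by move=> orth f g Tfg; rewrite hinner0l; apply: orth; exists g.
Qed.

Section LinearRelations.
Variables (R : realType) (H : hilbert R).

Lemma linrelD (K : lmodType R[i]) (T : linrel H K) f g f' g' :
  is_linrel T -> T (f, g) -> T (f', g') -> T (f + f', g + g').
Proof. by move=> [_ lin] Tfg Tfg'; have := lin 1 _ _ _ _ Tfg Tfg'; rewrite !scale1r. Qed.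

Lemma linrelB (K : lmodType R[i]) (T : linrel H K) f g f' g' :
  is_linrel T -> T (f, g) -> T (f', g') -> T (f - f', g - g').
Proof.
move=> [_ lin] Tfg Tfg'; have := lin (-1) _ _ _ _ Tfg' Tfg.
by rewrite !scaleN1r !(addrC (- _)).
Qed.

Variables (S : linrel H H) (c : R).
Hypothesis lS : is_linrel S.

Lemma rdom0 : rdom S 0.
Proof. by exists 0; case: lS. Qed.

Lemma rdom_subspace : is_subspace (rdom S).
Proof.
split; first exact: rdom0.
by move=> a x y [x' Sx] [y' Sy]; exists (a *: x' + y'); exact: lS.2.
Qed.

Section RepresentingMap.
Variables (K : hilbert R) (Q : H -> K).
Hypothesis rQ : representing_map S c Q.

Lemma hinner_repr_map x x' psi : S (x, x') -> rdom S psi ->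
  hinner K (Q x) (Q psi) = hinner H (x' - c%:C *: x) psi.
Proof.
by move=> Sx dpsi; rewrite hinnerBl hinnerZl (rQ.2 _ _ _ Sx dpsi) addrC addKr.
Qed.

Lemma repr_map0 : Q 0 = 0.
Proof.
have := rQ.1 1 0 0 rdom0 rdom0; rewrite !scale1r addr0 => Q00.
by apply: (addrI (Q 0)); rewrite addr0 -Q00.
Qed.

Lemma repr_mapB x y : rdom S x -> rdom S y -> Q (x - y) = Q x - Q y.
Proof. by move=> dx dy; have := rQ.1 (-1) y x dy dx; rewrite !scaleN1r !(addrC (- _)). Qed.

Lemma repr_map_eq0 x x' : S (x, x') -> Q x = 0 <-> horth (rdom S) (x' - c%:C *: x).
Proof.
move=> Sx; have dx : rdom S x by exists x'.
split => [Qx0 psi dpsi | orth]; first by rewrite -(hinner_repr_map Sx dpsi) Qx0 hinner0l.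
by apply: hinner_eq0; rewrite (hinner_repr_map Sx dx) orth.
Qed.

Lemma rmul_sub_horth : rmul S `<=` horth (rdom S).
Proof.
move=> k Sk psi dpsi; have := hinner_repr_map Sk dpsi.
by rewrite repr_map0 hinner0l scaler0 subr0.
Qed.

Lemma rran_repr_map_subspace : is_subspace (rran (rop S Q)).
Proof.
split; first by exists 0; split; [exact: rdom0 | rewrite /= repr_map0].
move=> a _ _ [x [/= dx ->]] [y [/= dy ->]]; exists (a *: x + y); split => /=.
  exact: rdom_subspace.2.
by rewrite rQ.1.
Qed.

Lemma rdom_companion : rdom (companion S c Q) = rran (rop S Q).
Proof.
apply/seteqP; split => u.
  by move=> [_ [x [x' [Sx [/= -> _]]]]]; exists x; split => //; exists x'.
by move=> [x [[x' Sx] /= ->]]; exists (x' - c%:C *: x), x, x'.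
Qed.

Lemma radj_companionP f g : radj (companion S c Q) (f, g) <->
  (forall x x', S (x, x') -> hinner K g (Q x) = hinner H f (x' - c%:C *: x)).
Proof.
split => [adj x x' Sx | adj _ _ [x [x' [Sx [/= -> /= ->]]]]]; last exact: adj.
by apply: adj; exists x, x'.
Qed.

Lemma rreg_radj_companionP f h : rreg (radj (companion S c Q)) (f, h) <->
  radj (companion S c Q) (f, h) /\ hclosure (rran (rop S Q)) h.
Proof.
rewrite /rreg /= rmul_radj rdom_companion.
split => [[g [/radj_companionP adj [/= gh orth]]] | [adj clh]].
  split; last exact: horth_horth_sub rran_repr_map_subspace _ orth.
  apply/radj_companionP => x x' Sx; rewrite -adj //.
  apply/eqP; rewrite eq_sym -subr_eq0 -hinnerBl gh //.
  by exists x; split => //; exists x'.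
exists h; split => //=; split; first by move=> a _; rewrite subrr hinner0l.
by move=> y orth; rewrite hinnerC (horth_hclosure orth clh) conjc0.
Qed.

Lemma sub_raddc_companion_comp : S `<=` raddc c (rcomp (companion S c Q) (rop S Q)).
Proof.
move=> [x x'] Sx /=; exists (x' - c%:C *: x); split; last by rewrite subrK.
by exists (Q x); split; [split => //=; exists x' | exists x, x'].
Qed.

Lemma raddc_companion_comp_eqP : S = raddc c (rcomp (companion S c Q) (rop S Q)) <->
  rran (rsubc S c) `&` rmul (radj S) = rmul S.
Proof.
rewrite rmul_radj; split => [ST | E].
  apply/seteqP; split => k; last first.
    by move=> Sk; split; [exists 0, k; rewrite scaler0 subr0 | exact: rmul_sub_horth].
  move=> [[x [x' [/= Sx ->]]] /= orth].
  have Qx0 : Q x = 0 by apply/(repr_map_eq0 Sx).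
  rewrite /rmul ST; exists (x' - c%:C *: x); split; last by rewrite scaler0 addr0.
  exists (Q 0); split; first by split => //; exact: rdom0.
  by exists x, x'; split => //; rewrite repr_map0 Qx0.
apply/seteqP; split; first exact: sub_raddc_companion_comp.
move=> [f h] [_ [[_ [[/= df ->] [x [x' [Sx [/= Qfx ->]]]]]] /= ->]].
have [f' Sf] := df; have Sd := linrelB lS Sx Sf.
have mul_d : rmul S (x' - f' - c%:C *: (x - f)).
  rewrite -E; split; first by exists (x - f), (x' - f').
  by apply/(repr_map_eq0 Sd); rewrite repr_mapB // -?Qfx ?subrr //; exists x'.
have := linrelD lS Sf mul_d; rewrite addr0 scalerBr.
by rewrite addrA [f' + _]addrC subrK opprB addrA addrAC.
Qed.

End RepresentingMap.

Lemma repr_map_eq (K K' : hilbert R) (Q : H -> K) (Q' : H -> K') x y :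
  representing_map S c Q -> representing_map S c Q' ->
  rdom S x -> rdom S y -> Q x = Q y -> Q' x = Q' y.
Proof.
move=> rQ rQ' dx dy Qxy; have [x' Sx] := dx; have [y' Sy] := dy.
have Sxy := linrelB lS Sx Sy.
have : Q (x - y) = 0 by rewrite (repr_mapB rQ) // Qxy subrr.
move/(repr_map_eq0 rQ Sxy)/(repr_map_eq0 rQ' Sxy).
by rewrite (repr_mapB rQ') // => /eqP; rewrite subr_eq0 => /eqP.
Qed.

Lemma companion_comp_sub (K K' : hilbert R) (Q : H -> K) (Q' : H -> K') :
  representing_map S c Q -> representing_map S c Q' ->
  rcomp (companion S c Q) (rop S Q) `<=` rcomp (companion S c Q') (rop S Q').
Proof.
move=> rQ rQ' [f h] [_ [[/= df ->] [x [x' [Sx [/= Qfx ->]]]]]].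
exists (Q' f); split; first by [].
exists x, x'; split => //; split => //=.
by apply: (repr_map_eq rQ rQ' df) => //; exists x'.
Qed.

Lemma companion_comp_eq (K K' : hilbert R) (Q : H -> K) (Q' : H -> K') :
  representing_map S c Q -> representing_map S c Q' ->
  rcomp (companion S c Q) (rop S Q) = rcomp (companion S c Q') (rop S Q').
Proof. by move=> rQ rQ'; apply/seteqP; split; exact: companion_comp_sub. Qed.

Section PartialIsometry.
Variables (K K' : hilbert R) (Q : H -> K) (Q' : H -> K') (V : {linear K -> K'}).
Hypotheses (rQ : representing_map S c Q) (rQ' : representing_map S c Q').
Hypothesis piV :
  partial_isometry V (hclosure (rran (rop S Q))) (hclosure (rran (rop S Q'))).
Hypothesis QV : forall x, rdom S x -> Q' x = V (Q x).

Lemma companion_comp_opgraph :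
  rcomp (companion S c Q') (opgraph (rran (rop S Q)) V) = companion S c Q.
Proof.
apply/seteqP; split => -[f h] /=.
  move=> [_ [[[y [/= dy ->]] /= ->] [x [x' [Sx [/= VQx ->]]]]]].
  exists x, x'; split => //; split => //=.
  by apply: (repr_map_eq rQ' rQ dy) => //; [exists x' | rewrite QV].
move=> [x [x' [Sx [/= -> ->]]]]; have dx : rdom S x by exists x'.
by exists (V (Q x)); split; [split => //; exists x | exists x, x'; rewrite QV].
Qed.

Lemma hinner_partial_isometry g x x' : hclosure (rran (rop S Q)) g -> S (x, x') ->
  hinner K' (V g) (Q' x) = hinner K g (Q x).
Proof.
move=> clg Sx; have dx : rdom S x by exists x'.
have Mx : rran (rop S Q) (Q x) by exists x.
have subM := rran_repr_map_subspace rQ.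
rewrite QV //; apply: (linear_isometry_hinner piV.1 clg).
- exact: hclosure_sub.
- exact: (hclosureDr subM clg Mx).
- exact: (hclosureDr subM clg (subspaceZ subM 'i Mx)).
Qed.

Lemma rreg_radj_companion_opgraph : rreg (radj (companion S c Q')) =
  rcomp (opgraph setT V) (rreg (radj (companion S c Q))).
Proof.
have [_ [van rng]] := piV.
apply/seteqP; split => -[f h] /=.
  move=> /(rreg_radj_companionP rQ') [/radj_companionP adj' clh].
  rewrite -rng in clh; have [k _ Vk] := clh.
  have [l cll kl] := orthogonal_projection (rran_repr_map_subspace rQ) k.
  have Vl : V l = h.
    rewrite -Vk; apply/eqP; rewrite eq_sym -subr_eq0 -linearB van //.
    exact: horth_hclosure kl.
  exists l; split => //; apply/(rreg_radj_companionP rQ); split => //.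
  apply/radj_companionP => x x' Sx.
  by rewrite -(hinner_partial_isometry cll Sx) Vl (adj' _ _ Sx).
move=> [g [/(rreg_radj_companionP rQ) [/radj_companionP adj clg] [_ /= ->]]].
apply/(rreg_radj_companionP rQ'); split; last by rewrite -rng; exists g.
by apply/radj_companionP => x x' Sx; rewrite (hinner_partial_isometry clg Sx) (adj _ _ Sx).
Qed.

End PartialIsometry.
End LinearRelations.

Theorem lemma3p2 (R : realType) (H Kc Kc' : hilbert R) (S : linrel H H)
  (gamma c : R) (Q : H -> Kc) (Q' : H -> Kc') (V : {linear Kc -> Kc'}) :
  is_linrel S ->
  semibounded_lb S gamma ->
  c <= gamma ->
  representing_map S c Q ->
  representing_map S c Q' ->
  partial_isometry V (hclosure (rran (rop S Q))) (hclosure (rran (rop S Q'))) ->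
  (forall phi, rdom S phi -> Q' phi = V (Q phi)) ->
  let Jc := companion S c Q in
  let Jc' := companion S c Q' in
  [/\ rcomp Jc' (opgraph (rran (rop S Q)) V) = Jc,
      S `<=` raddc c (rcomp Jc' (rop S Q')),
      raddc c (rcomp Jc' (rop S Q')) = raddc c (rcomp Jc (rop S Q)),
      (S = raddc c (rcomp Jc (rop S Q)) <->
         rran (rsubc S c) `&` rmul (radj S) = rmul S) &
      rreg (radj Jc') = rcomp (opgraph setT V) (rreg (radj Jc))].
Proof.
move=> lS _ _ rQ rQ' piV QV Jc Jc'; split.
- exact: companion_comp_opgraph.
- exact: sub_raddc_companion_comp.
- by rewrite (companion_comp_eq lS rQ' rQ).
- exact: raddc_companion_comp_eqP.
- exact: rreg_radj_companion_opgraph.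
Qed.
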